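(* Let $\mathcal{H}$ be a complex separable Hilbert space and $\mathcal{E}(\mathcal{H})$ its set of effects. The function $\mathcal{B}_0:\mathcal{E}(\mathcal{H})\to\mathbb{R}$ defined by $$\mathcal{B}_0(A):=\|A\|-\|I-A\|$$ is a bias measure.
   Context: An effect is a selfadjoint bounded operator $A$ on $\mathcal{H}$ with $\mathbb{O}\le A\le I$; $\mathcal{E}(\mathcal{H})$ is the set of effects, $A':=I-A$, norms are operator norms, $\sigma_A$ is the spectrum of $A$. For an effect $A$ put $\mu(\sigma_A):=\tfrac12(\max\sigma_A+\min\sigma_A)=\tfrac12(\|A\|+1-\|A'\|)$; $A$ is called unbiased if $\mu(\sigma_A)=\tfrac12$. A function $\mathcal{B}:\mathcal{E}(\mathcal{H})\to\mathbb{R}$ is a bias measure if: (B1) $-1\le\mathcal{B}(A)\le1$; (B2) $\mathcal{B}(A)=0$ iff $\mu(\sigma_A)=\tfrac12$; (B3) $\mathcal{B}(A)=1$ iff $A=I$, and $\mathcal{B}(A)=-1$ iff $A=\mathbb{O}$; (B4) $\mathcal{B}(A)=-\mathcal{B}(A')$; (B5) $\mathcal{B}(CAC^{-1})=\mathcal{B}(A)$ for every invertible bounded operator $C$ such that $CAC^{-1}$ is an effect; (B6) $A\mapsto\mathcal{B}(A)$ is continuous in operator norm. *)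

From HB Require Import structures.
From mathcomp Require Import all_boot all_order all_algebra.
From mathcomp Require Import complex.
From mathcomp Require Import boolp classical_sets reals.
Set Implicit Arguments. Unset Strict Implicit. Unset Printing Implicit Defensive.
Import Order.TTheory GRing.Theory Num.Theory.
Local Open Scope ring_scope.
Local Open Scope classical_set_scope.

Record hilbert (R : realType) := Hilbert {
  hcar :> lmodType R[i];
  ip : hcar -> hcar -> R[i];
  ipD : forall x y z, ip (x + y) z = ip x z + ip y z;
  ipZ : forall (a : R[i]) x y, ip (a *: x) y = a * ip x y;
  ip_sym : forall x y, ip y x = conjc (ip x y);
  ip_ge0 : forall x, 0 <= ip x x;
  ip_eq0 : forall x, ip x x = 0 -> x = 0;
  hnorm_of : hcar -> R := fun x => Num.sqrt (complex.Re (ip x x));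
  h_complete : forall u : nat -> hcar,
    (forall e : R, 0 < e -> exists N, forall m n, (N <= m)%N -> (N <= n)%N ->
        hnorm_of (u m - u n) < e) ->
    exists l, forall e : R, 0 < e -> exists N, forall n, (N <= n)%N ->
        hnorm_of (u n - l) < e;
  h_separable : exists d : nat -> hcar,
    forall x (e : R), 0 < e -> exists n, hnorm_of (x - d n) < e;
  h_nontrivial : exists x : hcar, x <> 0
}.

Section Operators.
Variables (R : realType) (H : hilbert R).

Definition hnorm (x : H) : R := Num.sqrt (complex.Re (ip x x)).

Definition bounded_linear (T : H -> H) : Prop :=
  (forall (a : R[i]) x y, T (a *: x + y) = a *: T x + T y) /\
  (exists M : R, forall x, hnorm (T x) <= M * hnorm x).

Definition opnorm (T : H -> H) : R :=
  sup [set hnorm (T x) | x in [set x : H | hnorm x <= 1]].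

Definition selfadjoint (T : H -> H) : Prop :=
  forall x y, ip (T x) y = ip x (T y).

Definition is_effect (A : H -> H) : Prop :=
  [/\ bounded_linear A, selfadjoint A,
      (forall x, 0 <= ip (A x) x) & (forall x, 0 <= ip (x - A x) x)].

Definition compl_eff (A : H -> H) : H -> H := fun x => x - A x.

Definition invertible_op (T : H -> H) : Prop :=
  exists S : H -> H, [/\ bounded_linear S, cancel T S & cancel S T].

Definition spectrum (T : H -> H) : set R[i] :=
  [set z | ~ invertible_op (fun x => T x - z *: x)].

(* real part of the spectrum (the whole spectrum, for selfadjoint T) *)
Definition rspectrum (T : H -> H) : set R := [set r : R | spectrum T (Complex r 0)].

Definition mu_spec (A : H -> H) : R :=
  (sup (rspectrum A) + inf (rspectrum A)) / 2.

Definition is_bias_measure (B : (H -> H) -> R) : Prop :=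
  [/\ (* B1 *) (forall A, is_effect A -> -1 <= B A <= 1) /\
      (* B2 *) (forall A, is_effect A -> (B A = 0 <-> mu_spec A = 1 / 2)),
      (* B3 *) (forall A, is_effect A ->
                  (B A = 1 <-> A = (fun x => x)) /\ (B A = -1 <-> A = (fun _ => 0))),
      (* B4 *) (forall A, is_effect A -> B A = - B (compl_eff A)),
      (* B5 *) (forall A (C Ci : H -> H), is_effect A ->
                  bounded_linear C -> bounded_linear Ci ->
                  cancel C Ci -> cancel Ci C ->
                  is_effect (C \o A \o Ci) -> B (C \o A \o Ci) = B A) &
      (* B6 *) (forall A, is_effect A -> forall e : R, 0 < e ->
                  exists2 d : R, 0 < d & forall A', is_effect A' ->
                    opnorm (fun x => A x - A' x) < d -> `|B A - B A'| < e)].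

Definition B0 (A : H -> H) : R := opnorm A - opnorm (compl_eff A).

End Operators.

From mathcomp Require Import all_boot all_order all_algebra.
From mathcomp Require Import complex.
From mathcomp Require Import boolp classical_sets reals.
From mathcomp Require Import ring lra.
Set Implicit Arguments. Unset Strict Implicit. Unset Printing Implicit Defensive.
Import Order.TTheory GRing.Theory Num.Theory.
Local Open Scope ring_scope.
Local Open Scope classical_set_scope.
Local Open Scope complex_scope.

(* For an effect A the real spectrum lies in [1 - ||A'||, ||A||]: outside this
   interval A - r is, up to sign, c - P with ||P|| < c, which is invertible by
   the contraction principle.  Both endpoints belong to the spectrum: for a
   positive operator P, Cauchy-Schwarz for the form <P., .> gives
   ||(||P|| - P) x||^2 <= ||P||^2 - ||P x||^2 on the unit ball, so ||P|| - P is
   not bounded below.  Hence B0 A = max sigma_A + min sigma_A - 1, which gives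
   (B2), and (B5) since the spectrum is invariant under similarity.  (B1), (B3)
   and (B4) are elementary facts about ||A||, ||A'|| in [0, 1], and (B6) follows
   from | ||S|| - ||T|| | <= ||S - T||. *)

Section RealInequalities.
Variable R : realType.
Implicit Types (a b c q t u v e : R).

Lemma quadratic_ge0_discr a b c : 0 <= c ->
  (forall t, 0 <= a - 2 * t * b + t ^+ 2 * c) -> b ^+ 2 <= a * c.
Proof.
move=> c0 hq; have [cpos|] := ltrP 0 c.
  have := hq (b / c); set u := b / c => hu.
  have hb : b = u * c by rewrite /u divfK // gt_eqF.
  rewrite hb in hu *; nra.
move=> cle; have c00 : c = 0 by apply/le_anti/andP.
have [-> | bn0] := eqVneq b 0; first by rewrite c00 expr0n mulr0.
have := hq ((a + 1) / (2 * b)); rewrite c00 mulr0 addr0.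
have -> : 2 * ((a + 1) / (2 * b)) * b = a + 1 by field.
lra.
Qed.

Lemma ler_of_sqr u v : 0 <= v -> u ^+ 2 <= v ^+ 2 -> u <= v.
Proof. nra. Qed.

Lemma ltr_of_sqr u v : 0 <= v -> u ^+ 2 < v ^+ 2 -> u < v.
Proof. nra. Qed.

Lemma expr_Bernoulli_le1 q n : 0 <= q -> q <= 1 ->
  q ^+ n * (1 + n%:R * (1 - q)) <= 1.
Proof.
move=> q0 q1; elim: n => [|n IH]; first by rewrite expr0 mul0r addr0 mulr1.
have qn1 : q * q ^+ n <= 1 by rewrite mulr_ile1 ?exprn_ge0 ?exprn_ile1.
rewrite exprS -natr1.
have -> : q * q ^+ n * (1 + (n%:R + 1) * (1 - q)) =
  q * (q ^+ n * (1 + n%:R * (1 - q))) + q * q ^+ n * (1 - q) by ring.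
nra.
Qed.

Lemma exists_expr_lt q e : 0 <= q -> q < 1 -> 0 < e -> exists n, q ^+ n < e.
Proof.
move=> q0 q1 e0.
have hp : 0 <= e^-1 / (1 - q) by rewrite divr_ge0 // ?invr_ge0 ?subr_ge0 ltW.
exists (Num.bound (e^-1 / (1 - q))).
set n := Num.bound _ in hp *.
have hn : e^-1 < n%:R * (1 - q).
  by move: (archi_boundP hp); rewrite ltr_pdivrMr ?subr_gt0.
set m := n%:R * (1 - q) in hn *.
have em : 1 < e * m by rewrite -(ltr_pM2l e0) mulfV ?gt_eqF in hn.
rewrite ltNge; apply/negP => le_e_qn.
have := expr_Bernoulli_le1 n q0 (ltW q1); rewrite -/m.
have : e * (1 + m) <= q ^+ n * (1 + m) by rewrite ler_wpM2r //; nra.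
lra.
Qed.

End RealInequalities.

Section InnerProduct.
Variables (R : realType) (H : hilbert R).
Implicit Types (x y z : H) (a : R[i]) (t : R).

Lemma ipDr x y z : ip x (y + z) = ip x y + ip x z.
Proof. by rewrite (ip_sym (y + z)) ipD rmorphD /= -!ip_sym. Qed.

Lemma ipZr a x y : ip x (a *: y) = conjc a * ip x y.
Proof. by rewrite (ip_sym (a *: y)) ipZ rmorphM /= -ip_sym. Qed.

Lemma ipNl x y : ip (- x) y = - ip x y.
Proof. by rewrite -scaleN1r ipZ mulN1r. Qed.

Lemma ipNr x y : ip x (- y) = - ip x y.
Proof. by rewrite (ip_sym (- y)) ipNl rmorphN /= -ip_sym. Qed.

(* The norm only sees the real part of the inner product; the whole argument
   takes place in this real inner product space. *)
Definition rip x y : R := complex.Re (ip x y).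

Lemma ripDl x y z : rip (x + y) z = rip x z + rip y z.
Proof. by rewrite /rip ipD raddfD. Qed.

Lemma ripDr x y z : rip x (y + z) = rip x y + rip x z.
Proof. by rewrite /rip ipDr raddfD. Qed.

Lemma ripNl x y : rip (- x) y = - rip x y.
Proof. by rewrite /rip ipNl raddfN. Qed.

Lemma ripNr x y : rip x (- y) = - rip x y.
Proof. by rewrite /rip ipNr raddfN. Qed.

Lemma ripBl x y z : rip (x - y) z = rip x z - rip y z.
Proof. by rewrite ripDl ripNl. Qed.

Lemma ripBr x y z : rip x (y - z) = rip x y - rip x z.
Proof. by rewrite ripDr ripNr. Qed.

Lemma ripZl t x y : rip (t%:C *: x) y = t * rip x y.
Proof. by rewrite /rip ipZ; case: (ip x y) => u v /=; rewrite mul0r subr0. Qed.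

Lemma ripZr t x y : rip x (t%:C *: y) = t * rip x y.
Proof. by rewrite /rip ipZr conjc_real; case: (ip x y) => u v /=; rewrite mul0r subr0. Qed.

Lemma ripC x y : rip x y = rip y x.
Proof. by rewrite /rip (ip_sym x y); case: (ip x y) => u v. Qed.

Lemma rip_ge0 x : 0 <= rip x x.
Proof. by have := ip_ge0 x; rewrite lecE => /andP[]. Qed.

Lemma hnorm_ge0 x : 0 <= hnorm x.
Proof. exact: sqrtr_ge0. Qed.

Lemma hnorm_sqr x : hnorm x ^+ 2 = rip x x.
Proof. by rewrite sqr_sqrtr // rip_ge0. Qed.

Lemma hnorm_eq0 x : hnorm x = 0 -> x = 0.
Proof.
move=> hx0; apply: ip_eq0; have := hnorm_sqr x; rewrite hx0 expr0n /= /rip.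
by have := ip_ge0 x; case: (ip x x) => u v; rewrite lecE /= => /andP[/eqP -> _] <-.
Qed.

Lemma hnorm_gt0 x : x <> 0 -> 0 < hnorm x.
Proof. by move=> xn0; rewrite lt0r hnorm_ge0 andbT; apply/eqP => /hnorm_eq0. Qed.

Lemma hnormZ t x : hnorm (t%:C *: x) = `|t| * hnorm x.
Proof. by rewrite /hnorm -/(rip _ _) ripZl ripZr mulrA -expr2 sqrtrM ?sqr_ge0 // sqrtr_sqr. Qed.

Lemma hnormZ_ge0 t x : 0 <= t -> hnorm (t%:C *: x) = t * hnorm x.
Proof. by move=> t0; rewrite hnormZ ger0_norm. Qed.

Lemma hnorm0 : hnorm (0 : H) = 0.
Proof. by rewrite -(scale0r (0 : H)) -[0 : R[i]]/(0%:C) hnormZ normr0 mul0r. Qed.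

Lemma hnormN x : hnorm (- x) = hnorm x.
Proof. by rewrite /hnorm -/(rip _ _) ripNl ripNr opprK. Qed.

Lemma hdistC x y : hnorm (x - y) = hnorm (y - x).
Proof. by rewrite -opprB hnormN. Qed.

Lemma rip_le_hnormM x y : rip x y <= hnorm x * hnorm y.
Proof.
apply: ler_of_sqr; first by rewrite mulr_ge0 ?hnorm_ge0.
rewrite exprMn !hnorm_sqr; apply: quadratic_ge0_discr (rip_ge0 y) _ => t.
have := rip_ge0 (x - t%:C *: y).
by rewrite ripBl !ripBr !ripZl !ripZr (ripC y x) mulrA (mulrC t) -expr2; lra.
Qed.

Lemma hnormD x y : hnorm (x + y) <= hnorm x + hnorm y.
Proof.
apply: ler_of_sqr; first by rewrite addr_ge0 ?hnorm_ge0.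
rewrite hnorm_sqr ripDl !ripDr (ripC y x) sqrrD !hnorm_sqr.
have := rip_le_hnormM x y; lra.
Qed.

Lemma hnormB x y : hnorm (x - y) <= hnorm x + hnorm y.
Proof. by rewrite -(hnormN y) hnormD. Qed.

Lemma hnorm_le0 x : (forall e : R, 0 < e -> hnorm x <= e) -> x = 0.
Proof.
move=> small; apply: hnorm_eq0; apply/le_anti; rewrite hnorm_ge0 andbT.
by apply/ler_addgt0Pr => e e0; rewrite add0r small.
Qed.

End InnerProduct.

Section OperatorNorm.
Variables (R : realType) (H : hilbert R).
Implicit Types (x y : H) (a : R[i]) (S T : H -> H).

Definition linop T := forall a x y, T (a *: x + y) = a *: T x + T y.

Definition bounded_op T := exists M : R, forall x, hnorm (T x) <= M * hnorm x.

Section Linear.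
Variables (T : H -> H) (linT : linop T).

Lemma linop0 : T 0 = 0.
Proof.
have h := linT 1 0 0; rewrite !scale1r !addr0 in h.
by apply: (addrI (T 0)); rewrite addr0 -h.
Qed.

Lemma linopD x y : T (x + y) = T x + T y.
Proof. by rewrite -[x]scale1r linT !scale1r. Qed.

Lemma linopZ a x : T (a *: x) = a *: T x.
Proof. by rewrite -[a *: x]addr0 linT linop0 addr0. Qed.

Lemma linopN x : T (- x) = - T x.
Proof. by rewrite -scaleN1r linopZ scaleN1r. Qed.

Lemma linopB x y : T (x - y) = T x - T y.
Proof. by rewrite linopD linopN. Qed.

End Linear.

Let unit_image T := [set hnorm (T x) | x in [set x : H | hnorm x <= 1]].

Lemma unit_image_ubound T : bounded_op T -> has_ubound (unit_image T).
Proof.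
move=> [M hM]; exists `|M| => _ [x hx <-].
apply: le_trans (hM x) _; apply: le_trans (ler_norm _) _.
by rewrite normrM (ger0_norm (hnorm_ge0 x)) ler_piMr.
Qed.

Lemma unit_image_neq0 T : unit_image T !=set0.
Proof. by exists (hnorm (T 0)), 0; rewrite //= hnorm0 ler01. Qed.

Lemma opnorm_le T c : (forall x, hnorm x <= 1 -> hnorm (T x) <= c) -> opnorm T <= c.
Proof. by move=> hc; apply: ge_sup (unit_image_neq0 T) _ => _ [x hx <-]; apply: hc. Qed.

Lemma opnorm_ge T x : bounded_op T -> hnorm x <= 1 -> hnorm (T x) <= opnorm T.
Proof. by move=> bT hx; apply: (ub_le_sup (unit_image_ubound bT)); exists x. Qed.

Lemma opnorm_ge0 T : linop T -> bounded_op T -> 0 <= opnorm T.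
Proof. by move=> lT bT; rewrite -(hnorm0 H) -(linop0 lT) opnorm_ge // hnorm0 ler01. Qed.

Lemma opnorm_adherent T e : bounded_op T -> 0 < e ->
  exists2 x, hnorm x <= 1 & opnorm T - e < hnorm (T x).
Proof.
move=> bT e0.
have [_ [x hx <-]] := sup_adherent e0 (conj (unit_image_neq0 T) (unit_image_ubound bT)).
by exists x.
Qed.

Lemma opnormP T : linop T -> bounded_op T -> forall x, hnorm (T x) <= opnorm T * hnorm x.
Proof.
move=> lT bT x; have [x0|/eqP/hnorm_gt0 hx] := eqVneq x 0.
  by rewrite x0 linop0 // hnorm0 mulr0.
have := @opnorm_ge T ((hnorm x)^-1%:C *: x) bT.
rewrite linopZ // !hnormZ_ge0 ?invr_ge0 ?hnorm_ge0 // mulVf ?gt_eqF // => /(_ (lexx _)).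
by rewrite ler_pdivrMl // mulrC.
Qed.

Lemma bounded_opB S T : bounded_op S -> bounded_op T -> bounded_op (fun x => S x - T x).
Proof.
move=> [M hM] [N hN]; exists (M + N) => x; rewrite mulrDl.
by apply: le_trans (hnormB _ _) _; apply: lerD.
Qed.

Lemma opnormN T : opnorm (fun x => - T x) = opnorm T.
Proof.
by rewrite /opnorm; congr sup; apply/seteqP; split=> _ [x x1 <-]; exists x;
  rewrite //= hnormN.
Qed.

Lemma opnorm_dist S T : bounded_op S -> bounded_op T ->
  `|opnorm S - opnorm T| <= opnorm (fun x => S x - T x).
Proof.
move=> bS bT; have bST := bounded_opB bS bT.
have tri U V : bounded_op V -> (forall x, hnorm (U x) <= hnorm (V x) + hnorm (S x - T x)) ->
    opnorm U <= opnorm V + opnorm (fun x => S x - T x).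
  move=> bV hUV; apply: opnorm_le => x hx; apply: le_trans (hUV x) _.
  by apply: lerD; [exact: opnorm_ge | exact: (@opnorm_ge (fun y => S y - T y))].
have tS : opnorm S <= opnorm T + opnorm (fun x => S x - T x).
  by apply: tri bT _ => x; rewrite -{1}(subrK (T x) (S x)) addrC hnormD.
have tT : opnorm T <= opnorm S + opnorm (fun x => S x - T x).
  apply: tri bS _ => x; rewrite hdistC.
  by rewrite -{1}(subrK (S x) (T x)) addrC hnormD.
rewrite ler_norml; apply/andP; split; lra.
Qed.

Lemma opnorm_id : opnorm (@id H) = 1.
Proof.
apply/le_anti; rewrite opnorm_le //=.
have [x /hnorm_gt0 hx] := h_nontrivial H.
have bid : bounded_op id by exists 1 => y; rewrite mul1r.
have := opnormP (fun a y z => erefl) bid x.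
by rewrite -{1}(mul1r (hnorm x)) ler_pM2r.
Qed.

Lemma opnorm0 : opnorm (fun _ : H => 0) = 0.
Proof.
have b0 : bounded_op (fun _ : H => 0) by exists 0 => x; rewrite hnorm0 mul0r.
apply/le_anti; rewrite opnorm_le => [|x _]; last by rewrite hnorm0.
by rewrite -(hnorm0 H) (opnorm_ge (x := 0)) // hnorm0 ler01.
Qed.

Lemma opnorm_eq0 T : linop T -> bounded_op T -> opnorm T = 0 -> T = fun _ => 0.
Proof.
move=> lT bT T0; apply/funext => x; apply: hnorm_eq0; apply/le_anti.
by rewrite hnorm_ge0 andbT -(mul0r (hnorm x)) -T0 opnormP.
Qed.

End OperatorNorm.

Section Contraction.
Variables (R : realType) (H : hilbert R) (F : H -> H) (q : R).
Hypotheses (q_ge0 : 0 <= q) (q_lt1 : q < 1)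
  (contrF : forall x y, hnorm (F x - F y) <= q * hnorm (x - y)).

Let u n := iter n F 0.
Let D := hnorm (u 1 - u 0) / (1 - q).

Lemma iter_contraction_step n : hnorm (u n.+1 - u n) <= q ^+ n * hnorm (u 1 - u 0).
Proof.
elim: n => [|n IH]; first by rewrite expr0 mul1r.
apply: le_trans (contrF _ _) _.
by rewrite exprS -mulrA ler_wpM2l.
Qed.

Lemma iter_contraction_dist m k : hnorm (u (m + k) - u m) <= D * (q ^+ m - q ^+ (m + k)).
Proof.
elim: k => [|k IH]; first by rewrite addn0 !subrr hnorm0 mulr0.
rewrite addnS -(subrK (u (m + k)%N) (u (m + k).+1)) -addrA.
apply: le_trans (hnormD _ _) _.
have DqE : D * (1 - q) = hnorm (u 1 - u 0) by rewrite divfK // subr_eq0 gt_eqF.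
have -> : D * (q ^+ m - q ^+ (m + k).+1) =
  q ^+ (m + k) * (D * (1 - q)) + D * (q ^+ m - q ^+ (m + k)) by rewrite exprS; ring.
by rewrite DqE lerD // iter_contraction_step.
Qed.

Lemma iter_contraction_cauchy m n : (m <= n)%N -> hnorm (u n - u m) <= D * q ^+ m.
Proof.
move/subnKC <-; apply: le_trans (iter_contraction_dist _ _) _.
have D0 : 0 <= D by rewrite divr_ge0 ?hnorm_ge0 // subr_ge0 ltW.
by rewrite ler_wpM2l // gerBl exprn_ge0.
Qed.

Lemma contraction_fixpoint : exists x, F x = x.
Proof.
have D0 : 0 <= D by rewrite divr_ge0 ?hnorm_ge0 // subr_ge0 ltW.
have qmon m n : (m <= n)%N -> q ^+ n <= q ^+ m.
  by move=> /subnKC <-; rewrite exprD ler_piMr ?exprn_ge0 // exprn_ile1 // ltW.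
have [l ul] : exists l, forall e : R, 0 < e ->
    exists N, forall n, (N <= n)%N -> hnorm (u n - l) < e.
  apply: h_complete => e e0.
  have [N qN] := exists_expr_lt q_ge0 q_lt1 (divr_gt0 e0 (ltr_wpDl D0 ltr01)).
  have DqN : D * q ^+ N < e.
    by move: qN; rewrite ltr_pdivlMr ?ltr_wpDl //; have := exprn_ge0 N q_ge0; nra.
  suff near m n : (N <= m)%N -> (m <= n)%N -> hnorm (u n - u m) < e.
    have cauchy m n : (N <= m)%N -> (N <= n)%N -> hnorm (u m - u n) < e.
      move=> Nm Nn; have [mn|/ltnW nm] := leqP m n; first by rewrite hdistC near.
      exact: near.
    by exists N.
  move=> Nm mn; apply: le_lt_trans (iter_contraction_cauchy mn) _.
  by apply: le_lt_trans DqN; rewrite ler_wpM2l // qmon.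
exists l; apply/eqP; rewrite -subr_eq0; apply/eqP; apply: hnorm_le0 => e e0.
have [N hN] := ul (e / 2) (divr_gt0 e0 (ltr0Sn _ 1)).
have -> : F l - l = (F l - F (u N)) + (u N.+1 - l) by rewrite /u iterS addrA subrK.
apply: le_trans (hnormD _ _) _.
have := contrF l (u N); rewrite [hnorm (l - _)]hdistC.
have : q * hnorm (u N - l) <= hnorm (u N - l) by rewrite ler_piMl ?hnorm_ge0 ?ltW.
have := hN N (leqnn N); have := hN N.+1 (leqnSn N); lra.
Qed.

End Contraction.

Section Invertibility.
Variables (R : realType) (H : hilbert R).
Implicit Types (x y : H) (a w : R[i]) (P T U : H -> H).

Lemma invertible_opN T : invertible_op T -> invertible_op (fun x => - T x).
Proof.
move=> [S [[lS [K hK]] TK SK]]; exists (fun y => S (- y)); split.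
- split; first by move=> a x y; rewrite opprD -scalerN lS.
  by exists K => y; rewrite -(hnormN y); apply: hK.
- by move=> x /=; rewrite opprK TK.
- by move=> y /=; rewrite SK opprK.
Qed.

Lemma invertible_op_bounded_below T (c : R) : linop T -> 0 < c ->
  (forall x, c * hnorm x <= hnorm (T x)) -> (forall y, exists x, T x = y) ->
  invertible_op T.
Proof.
move=> lT c0 lb surj.
have injT : injective T.
  move=> x1 x2 eqT; apply/eqP; rewrite -subr_eq0; apply/eqP; apply: hnorm_eq0.
  apply/le_anti; rewrite hnorm_ge0 andbT -(pmulr_rle0 _ c0).
  by have := lb (x1 - x2); rewrite linopB // eqT subrr hnorm0.
pose S y := projT1 (cid (surj y)).
have TS : cancel S T by move=> y; rewrite /S; case: (cid _).
exists S; split.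
- split; first by move=> a x y; apply: injT; rewrite lT !TS.
  exists c^-1 => y; have := lb (S y); rewrite TS => lbS.
  by rewrite -(ler_pM2l c0) mulrA mulfV ?gt_eqF // mul1r.
- by move=> x; apply: injT; rewrite TS.
- exact: TS.
Qed.

Lemma not_invertible_op T : (forall K : R, exists x, K * hnorm (T x) < hnorm x) ->
  ~ invertible_op T.
Proof.
move=> unbounded [S [[_ [K hK]] TK _]]; have [x] := unbounded K.
by rewrite -{2}(TK x) ltNge hK.
Qed.

Lemma invertible_op_conj C Ci U : bounded_linear C -> bounded_linear Ci ->
  cancel C Ci -> cancel Ci C -> invertible_op U -> invertible_op (C \o U \o Ci).
Proof.
move=> [lC [M hM]] [lCi [Mi hMi]] CK CiK [S [[lS [K hK]] US SU]].
exists (C \o S \o Ci); split.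
- split; first by move=> a x y; rewrite /= lCi lS lC.
  exists (`|M| * `|K| * `|Mi|) => y /=.
  have bound_abs (B : R) (V : H -> H) : (forall z, hnorm (V z) <= B * hnorm z) ->
      forall z, hnorm (V z) <= `|B| * hnorm z.
    by move=> hV z; apply: le_trans (hV z) _; rewrite ler_wpM2r ?hnorm_ge0 ?ler_norm.
  apply: le_trans (bound_abs _ _ hM _) _; rewrite -!mulrA ler_wpM2l //.
  apply: le_trans (bound_abs _ _ hK _) _; rewrite ler_wpM2l //.
  exact: bound_abs _ _ hMi _.
- by move=> x /=; rewrite CK US CiK.
- by move=> y /=; rewrite CK SU CiK.
Qed.

Lemma linop_scale_sub w P : linop P -> linop (fun x => w *: x - P x).
Proof.
move=> lP a x y; rewrite lP scalerDr scalerA mulrC -scalerA.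
by rewrite scalerBr opprD addrACA.
Qed.

(* Neumann's argument: for [y] given, [x = c^-1 (y + P x)] is a contraction of
   ratio [N / c]. *)
Lemma invertible_scale_sub P (N c : R) : linop P ->
  (forall x, hnorm (P x) <= N * hnorm x) -> 0 <= N -> N < c ->
  invertible_op (fun x => c%:C *: x - P x).
Proof.
move=> lP bP N0 Nc; have c0 : 0 < c := le_lt_trans N0 Nc.
have ci0 : 0 <= c^-1 by rewrite invr_ge0 ltW.
apply: (@invertible_op_bounded_below _ (c - N)).
- exact: linop_scale_sub.
- by rewrite subr_gt0.
- move=> x; have := hnormD (c%:C *: x - P x) (P x).
  by rewrite subrK hnormZ_ge0 ?(ltW c0) //; have := bP x; lra.
move=> y; pose F x := c^-1%:C *: (y + P x).
have contrF x1 x2 : hnorm (F x1 - F x2) <= N / c * hnorm (x1 - x2).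
  rewrite /F -scalerBr opprD addrACA subrr add0r -linopB // hnormZ_ge0 //.
  by rewrite [N / c * _]mulrAC [_ * c^-1]mulrC ler_wpM2l.
have Nc1 : N / c < 1 by rewrite ltr_pdivrMr // mul1r.
have [x Fx] := contraction_fixpoint (divr_ge0 N0 (ltW c0)) Nc1 contrF.
exists x; rewrite -{1}Fx /F scalerA -rmorphM mulfV ?gt_eqF // scale1r.
by rewrite addrK.
Qed.

End Invertibility.

Section Effects.
Variables (R : realType) (H : hilbert R).
Implicit Types (x y : H) (P : H -> H).

(* Cauchy-Schwarz for the semi-inner product [(x, y) |-> rip (P x) y]. *)
Lemma selfadjoint_sqr_le P (N : R) : linop P -> selfadjoint P -> 0 <= N ->
  (forall y, 0 <= rip (P y) y) -> (forall y, rip (P y) y <= N * rip y y) ->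
  forall x, rip (P x) (P x) <= N * rip (P x) x.
Proof.
move=> lP sP N0 P_ge0 P_le x.
have sym y z : rip (P y) z = rip y (P z) by rewrite /rip sP.
have b_ge0 := rip_ge0 (P x).
have := @quadratic_ge0_discr _ (rip (P x) x) (rip (P x) (P x)) _ (mulr_ge0 N0 b_ge0).
have [->|b_neq0] := eqVneq (rip (P x) (P x)) 0; first by rewrite mulr_ge0 ?P_ge0.
have b_gt0 : 0 < rip (P x) (P x) by rewrite lt0r b_neq0.
rewrite mulrCA mulrA expr2 ler_pM2r // => -> // t.
have := P_ge0 (x - t%:C *: P x); have := P_le (P x).
rewrite linopB // linopZ // ripBl !ripBr !ripZl !ripZr sym [rip (P (P x)) x]sym.
have := sqr_ge0 t; nra.
Qed.

Section Effect.
Variable A : H -> H.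
Hypothesis effA : is_effect A.

Lemma effect_linop : linop A. Proof. by case: effA => [[]]. Qed.
Lemma effect_bounded : bounded_op A. Proof. by case: effA => [[]]. Qed.
Lemma effect_selfadjoint : selfadjoint A. Proof. by case: effA. Qed.

Lemma effect_form_ge0 x : 0 <= rip (A x) x.
Proof. by case: effA => _ _ /(_ x); rewrite lecE => /andP[]. Qed.

Lemma effect_form_le x : rip (A x) x <= rip x x.
Proof.
case: effA => _ _ _ /(_ x); rewrite lecE => /andP[_].
by rewrite -/(rip _ _) ripBl subr_ge0.
Qed.

Lemma effect_hnorm_le x : hnorm (A x) <= hnorm x.
Proof.
apply: ler_of_sqr; first exact: hnorm_ge0.
rewrite !hnorm_sqr; apply: le_trans (effect_form_le x).
rewrite -[rip (A x) x]mul1r; apply: selfadjoint_sqr_le => //.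
- exact: effect_linop.
- exact: effect_selfadjoint.
- exact: effect_form_ge0.
- by move=> y; rewrite mul1r effect_form_le.
Qed.

Lemma opnorm_effect_le1 : opnorm A <= 1.
Proof. by apply: opnorm_le => x; apply: le_trans (effect_hnorm_le x). Qed.

Lemma opnorm_effect_ge0 : 0 <= opnorm A.
Proof. exact: opnorm_ge0 effect_linop effect_bounded. Qed.

Lemma effect_opnormP x : hnorm (A x) <= opnorm A * hnorm x.
Proof. exact: opnormP effect_linop effect_bounded x. Qed.

Lemma effect_form_le_opnorm x : rip (A x) x <= opnorm A * rip x x.
Proof.
apply: le_trans (rip_le_hnormM _ _) _; rewrite -hnorm_sqr expr2 mulrA.
by rewrite ler_wpM2r ?hnorm_ge0 ?effect_opnormP.
Qed.

Lemma effect_sqr_le_opnorm x : rip (A x) (A x) <= opnorm A * rip (A x) x.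
Proof.
apply: selfadjoint_sqr_le; rewrite ?opnorm_effect_ge0 //.
- exact: effect_linop.
- exact: effect_selfadjoint.
- exact: effect_form_ge0.
- exact: effect_form_le_opnorm.
Qed.

Lemma compl_effectP : is_effect (compl_eff A).
Proof.
have lA := effect_linop; have sA := effect_selfadjoint.
split.
- split; first by move=> a x y; rewrite /compl_eff lA scalerBr opprD addrACA.
  exists 2 => x; apply: le_trans (hnormB _ _) _.
  by have := effect_hnorm_le x; lra.
- by move=> x y; rewrite /compl_eff ipD ipNl ipDr ipNr sA.
- by case: effA.
- by move=> x; rewrite /compl_eff opprB addrC subrK; case: effA.
Qed.

Lemma compl_effK : compl_eff (compl_eff A) = A.
Proof. by apply/funext => x; rewrite /compl_eff opprB addrC subrK. Qed.

End Effect.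
End Effects.

Section Spectrum.
Variables (R : realType) (H : hilbert R).
Implicit Types (x : H) (A P : H -> H).

Lemma effect_approx_eigen P x : is_effect P -> hnorm x <= 1 ->
  hnorm ((opnorm P)%:C *: x - P x) ^+ 2 <= opnorm P ^+ 2 - hnorm (P x) ^+ 2.
Proof.
move=> effP x1; set N := opnorm P; set Q := fun y => N%:C *: y - P y.
have N0 : 0 <= N := opnorm_effect_ge0 effP.
have lQ : linop Q := linop_scale_sub _ (effect_linop effP).
have sQ : selfadjoint Q.
  move=> y z; rewrite /Q ipD ipNl ipZ ipDr ipNr ipZr conjc_real.
  by rewrite (effect_selfadjoint effP).
have QE y : rip (Q y) y = N * rip y y - rip (P y) y by rewrite /Q ripBl ripZl.
have Q_ge0 y : 0 <= rip (Q y) y by rewrite QE subr_ge0 effect_form_le_opnorm.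
have Q_le y : rip (Q y) y <= N * rip y y by rewrite QE gerBl effect_form_ge0.
have rx1 : rip x x <= 1 by rewrite -hnorm_sqr expr_le1 ?hnorm_ge0.
rewrite !hnorm_sqr; apply: le_trans (selfadjoint_sqr_le lQ sQ N0 Q_ge0 Q_le x) _.
have := effect_sqr_le_opnorm effP x; have := effect_form_ge0 effP x.
rewrite QE -/N; nra.
Qed.

Lemma effect_opnorm_unbounded P : is_effect P ->
  forall K : R, exists x, K * hnorm ((opnorm P)%:C *: x - P x) < hnorm x.
Proof.
move=> effP K; set N := opnorm P; have N0 : 0 <= N := opnorm_effect_ge0 effP.
have [N_eq0|N_neq0] := eqVneq N 0.
  have [x /hnorm_gt0 x_gt0] := h_nontrivial H; exists x.
  have -> : P = fun _ => 0 by apply: opnorm_eq0 N_eq0; [exact: effect_linop|exact: effect_bounded].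
  by rewrite N_eq0 subr0 scale0r hnorm0 mulr0.
have N_gt0 : 0 < N by rewrite lt0r N_neq0.
set k := K ^+ 2; have k0 : 0 <= k := sqr_ge0 K.
(* [eps] is chosen so that [(N^2 - 2 N eps) (1 + k) = N^2 k]. *)
set eps := N / (2 * (1 + k)).
have eps_gt0 : 0 < eps by rewrite divr_gt0 // mulr_gt0 //; lra.
have k1 : 0 < 1 + k by lra.
have epsE : 2 * eps * (1 + k) = N by rewrite /eps; field; lra.
have [x x1 hx] := opnorm_adherent (effect_bounded effP) eps_gt0; rewrite -/N in hx.
exists x.
have Px_le := effect_hnorm_le effP x.
have eig := effect_approx_eigen effP x1; rewrite -/N in eig.
have t0 := hnorm_ge0 (P x).
set t := hnorm (P x) in hx Px_le eig t0.
have eps_le : 2 * eps <= N by nra.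
have t2 : N ^+ 2 - 2 * N * eps < t ^+ 2.
  have : 0 < (t - (N - eps)) * (t + (N - eps)).
    by rewrite mulr_gt0 // ?subr_gt0 //; lra.
  have := sqr_ge0 eps; rewrite !expr2; lra.
have t2k : (N ^+ 2 - 2 * N * eps) * (1 + k) < t ^+ 2 * (1 + k) by rewrite ltr_pM2r.
have NepsE : N * (2 * eps * (1 + k)) = N ^+ 2 by rewrite epsE expr2.
apply: ltr_of_sqr; first exact: hnorm_ge0.
rewrite exprMn -/k; nra.
Qed.

Lemma rspectrum_opnorm A : is_effect A -> rspectrum A (opnorm A).
Proof.
move=> effA; apply: not_invertible_op => K.
have [x hx] := effect_opnorm_unbounded effA K.
by exists x; rewrite hdistC.
Qed.

Lemma rspectrum_compl_opnorm A : is_effect A -> rspectrum A (1 - opnorm (compl_eff A)).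
Proof.
move=> effA; apply: not_invertible_op => K.
have [x hx] := effect_opnorm_unbounded (compl_effectP effA) K.
exists x; move: hx; congr (_ * hnorm _ < _).
rewrite -[Complex _ _]/((1 - _)%:C) rmorphB scalerBl scale1r /compl_eff.
by rewrite !opprB addrCA.
Qed.

Lemma rspectrum_le_opnorm A r : is_effect A -> rspectrum A r -> r <= opnorm A.
Proof.
move=> effA notinv; rewrite leNgt; apply/negP => Ar; apply: notinv.
have -> : (fun x => A x - r%:C *: x) = fun x => - (r%:C *: x - A x).
  by apply/funext => x; rewrite opprB.
apply/invertible_opN/(invertible_scale_sub (effect_linop effA) (effect_opnormP effA)) => //.
exact: opnorm_effect_ge0.
Qed.

Lemma rspectrum_ge_compl A r : is_effect A -> rspectrum A r ->
  1 - opnorm (compl_eff A) <= r.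
Proof.
move=> effA notinv; rewrite leNgt; apply/negP => rA; apply: notinv.
have effA' := compl_effectP effA.
have -> : (fun x => A x - r%:C *: x) = fun x => (1 - r)%:C *: x - compl_eff A x.
  apply/funext => x; rewrite rmorphB rmorph1 scalerBl scale1r /compl_eff.
  by symmetry; rewrite opprB addrC addrA subrK.
apply: (invertible_scale_sub (effect_linop effA') (effect_opnormP effA')).
- exact: opnorm_effect_ge0.
- by rewrite ltrBrDl -ltrBrDr.
Qed.

End Spectrum.

Section BiasMeasure.
Variables (R : realType) (H : hilbert R).
Implicit Types (A C Ci : H -> H).

Lemma sup_rspectrum A : is_effect A -> sup (rspectrum A) = opnorm A.
Proof.
move=> effA; have ubA : has_ubound (rspectrum A).
  by exists (opnorm A) => r; apply: rspectrum_le_opnorm.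
apply/le_anti/andP; split; last by apply: (ub_le_sup ubA); exact: rspectrum_opnorm.
apply: ge_sup => [|r]; last exact: rspectrum_le_opnorm.
by exists (opnorm A); exact: rspectrum_opnorm.
Qed.

Lemma inf_rspectrum A : is_effect A -> inf (rspectrum A) = 1 - opnorm (compl_eff A).
Proof.
move=> effA; have lbA : has_lbound (rspectrum A).
  by exists (1 - opnorm (compl_eff A)) => r; apply: rspectrum_ge_compl.
apply/le_anti/andP; split; first by apply: (ge_inf lbA); exact: rspectrum_compl_opnorm.
apply: lb_le_inf => [|r]; last exact: rspectrum_ge_compl.
by exists (1 - opnorm (compl_eff A)); exact: rspectrum_compl_opnorm.
Qed.

Lemma B0_rspectrum A : is_effect A -> B0 A = sup (rspectrum A) + inf (rspectrum A) - 1.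
Proof. by move=> effA; rewrite /B0 sup_rspectrum // inf_rspectrum //; ring. Qed.

Lemma rspectrum_conj A C Ci : bounded_linear C -> bounded_linear Ci ->
  cancel C Ci -> cancel Ci C -> rspectrum (C \o A \o Ci) = rspectrum A.
Proof.
move=> bC bCi CK CiK; have [lC _] := bC; have [lCi _] := bCi.
apply/funext => r; apply/propext; split=> notinv inv; apply: notinv.
- have -> : (fun x => (C \o A \o Ci) x - r%:C *: x) =
      C \o (fun y => A y - r%:C *: y) \o Ci.
    by apply/funext => x /=; rewrite (linopB lC) (linopZ lC) CiK.
  exact: invertible_op_conj.
- have -> : (fun x => A x - r%:C *: x) =
      Ci \o (fun y => (C \o A \o Ci) y - r%:C *: y) \o C.
    by apply/funext => x /=; rewrite (linopB lCi) (linopZ lCi) !CK.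
  exact: invertible_op_conj.
Qed.

Lemma compl_eff_id : compl_eff (@id H) = fun _ => 0.
Proof. by apply/funext => x; exact: subrr. Qed.

Lemma compl_eff0 : compl_eff (fun _ : H => 0) = id.
Proof. by apply/funext => x; rewrite /compl_eff subr0. Qed.

Lemma B0_range A : is_effect A -> -1 <= B0 A <= 1.
Proof.
move=> effA; have effA' := compl_effectP effA; rewrite /B0.
have := opnorm_effect_le1 effA; have := opnorm_effect_ge0 effA.
have := opnorm_effect_le1 effA'; have := opnorm_effect_ge0 effA'.
by move=> *; apply/andP; split; lra.
Qed.

Lemma B0_eq0 A : is_effect A -> B0 A = 0 <-> mu_spec A = 1 / 2.
Proof. by move=> effA; rewrite B0_rspectrum // /mu_spec; split; lra. Qed.

Lemma B0_compl A : is_effect A -> B0 A = - B0 (compl_eff A).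
Proof. by move=> effA; rewrite /B0 compl_effK // opprB. Qed.

Lemma B0_eq1 A : is_effect A -> B0 A = 1 <-> A = id.
Proof.
move=> effA; have effA' := compl_effectP effA; split => [B0A1|->]; last first.
  by rewrite /B0 compl_eff_id opnorm_id opnorm0 subr0.
have A'0 : opnorm (compl_eff A) = 0.
  move: B0A1; rewrite /B0; have := opnorm_effect_le1 effA.
  have := opnorm_effect_ge0 effA'; lra.
by rewrite -(compl_effK A) (opnorm_eq0 (effect_linop effA') (effect_bounded effA') A'0)
  compl_eff0.
Qed.

Lemma B0_eqN1 A : is_effect A -> B0 A = -1 <-> A = fun _ => 0.
Proof.
move=> effA; split => [B0A|->]; last by rewrite /B0 compl_eff0 opnorm0 opnorm_id sub0r.
have /(B0_eq1 (compl_effectP effA)) A'id : B0 (compl_eff A) = 1.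
  by apply: oppr_inj; rewrite -B0_compl.
by rewrite -(compl_effK A) A'id compl_eff_id.
Qed.

Lemma B0_continuous A : is_effect A -> forall e : R, 0 < e ->
  exists2 d : R, 0 < d & forall A', is_effect A' ->
    opnorm (fun x => A x - A' x) < d -> `|B0 A - B0 A'| < e.
Proof.
move=> effA e e0; exists (e / 2); first by rewrite divr_gt0.
move=> A' effA' dAA'.
have effC := compl_effectP effA; have effC' := compl_effectP effA'.
have d1 := opnorm_dist (effect_bounded effA) (effect_bounded effA').
have d2 := opnorm_dist (effect_bounded effC) (effect_bounded effC').
have complB : (fun x => compl_eff A x - compl_eff A' x) = fun x => - (A x - A' x).
  by apply/funext => x; rewrite /compl_eff opprB addrC addrA subrK opprB.
rewrite complB opnormN in d2.
move: d1 d2; rewrite /B0 !ler_norml ltr_norml => /andP[d1 d1'] /andP[d2 d2'].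
by apply/andP; split; lra.
Qed.

End BiasMeasure.

Theorem mainTheorem3 (R : realType) (H : hilbert R) : is_bias_measure (@B0 R H).
Proof.
split.
- by split=> A effA; [exact: B0_range | exact: B0_eq0].
- by move=> A effA; split; [exact: B0_eq1 | exact: B0_eqN1].
- exact: B0_compl.
- by move=> A C Ci effA bC bCi CK CiK effCA; rewrite !B0_rspectrum // rspectrum_conj.
- exact: B0_continuous.
Qed.
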